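(* Let $G=(V,E)$ be a Bitcoin network, let $M\in\Gamma$ be a legitimate monitor, and let $G_M=(V,E_M)$ be the local snapshot of $M$. If $M$ executes the procedure $AToM(V)$ (so that, for each node $N\in V$, an iteration consisting of $PeeV(N)$ followed by $updateTopology(E_M,L_N^M)$ has been carried out), then for all $N,P\in V$, $$(N,P)\in E \iff (N,P)\in E_M.$$
   Context: A Bitcoin network is modeled as a directed graph $G=(V,E)$ whose vertices are the (reachable) nodes; $(N,P)\in E$ means $N$ has an outbound connection to $P$. For a node $X$, $O_X=\{Y:(X,Y)\in E\}$ (outbound peers) and $I_X=\{Y:(Y,X)\in E\}$ (inbound peers). $\Gamma$ is a set of legitimate monitors, each connected to every node (these connections are not in $E$). A marker is a triple $[N,M,r]$ (target, monitor, value). $PeeV(N)$, run by $M$: start with empty $L_N^M$; draw random $r$; send $[N,M,r]$ to $N$; until a timeout, whenever a marker equal to $[N,M,r]$ is received from a node $P$, add $P$ to $L_N^M$; then output $L_N^M$. $HandleMarker(pfrom,[N,M,r])$, run by a node $X$: if $pfrom=M\in\Gamma$, forward the marker to all outbound peers of $X$; if $pfrom=N$ and $N$ is an inbound peer of $X$, send the marker to $M$; otherwise do nothing. $AToM(V)$, run by $M$ with local snapshot $G_M=(V_M,E_M)$: for each node $N\in V$, while $N$ is online, repeat: $L_N^M\leftarrow PeeV(N)$; $updateTopology(E_M,L_N^M)$, which for every $P\in V$ adds $(N,P)$ to $E_M$ if $P\in L_N^M$ and removes $(N,P)$ from $E_M$ otherwise; send $N$ its list of verified peers; adjust the scan period and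 wait. Standing assumptions: all nodes are honest and execute $HandleMarker$; no connection is established or dropped during the execution; every message is delivered before the $PeeV$ timeout expires. *)

From mathcomp Require Import all_boot.
Set Implicit Arguments. Unset Strict Implicit. Unset Printing Implicit Defensive.

Section Bitcoin.
(* V : the (reachable) Bitcoin nodes; Mon : identities of monitors;
   Gamma : the legitimate monitors; E : the connection graph,
   E N P  <->  N has an outbound connection to P. *)
Variables (V : finType) (Mon : Type) (Gamma : Mon -> Prop) (E : rel V).

Inductive agent := Node of V | Monitor of Mon.

Record marker := Marker { mk_target : V; mk_mon : Mon; mk_val : nat }.

(* HandleMarker(pfrom, mk) run by node X: [handle X pfrom mk Y] holds iff
   X sends mk to agent Y. *)
Definition handle (X : V) (pfrom : agent) (mk : marker) (Y : agent) : Prop :=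
  (pfrom = Monitor (mk_mon mk) /\ Gamma (mk_mon mk) /\
     exists Z, Y = Node Z /\ E X Z)
  \/ (pfrom = Node (mk_target mk) /\ E (mk_target mk) X
      /\ Y = Monitor (mk_mon mk)).

(* Messages carrying marker mk that are sent (and, by assumption, delivered
   before the timeout) during the run of PeeV for mk; all nodes are honest
   and run HandleMarker on every received marker. [msg mk A B]: A sends mk to B. *)
Inductive msg (mk : marker) : agent -> agent -> Prop :=
| msg_init : msg mk (Monitor (mk_mon mk)) (Node (mk_target mk))
| msg_handle (X : V) (pfrom Y : agent) :
    msg mk pfrom (Node X) -> handle X pfrom mk Y -> msg mk (Node X) Y.

(* PeeV(N) run by M with random value r: the list L_N^M of nodes P from
   which M received the marker [N, M, r]. *)
Definition PeeV (M : Mon) (r : nat) (N : V) : V -> Prop :=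
  fun P => msg (Marker N M r) (Node P) (Monitor M).

Definition updateTopology (EM : V -> V -> Prop) (N : V) (L : V -> Prop)
  : V -> V -> Prop :=
  fun X Y => if X == N then L Y else EM X Y.

Definition AToM (M : Mon) (r : V -> nat) (EM0 : V -> V -> Prop)
  : V -> V -> Prop :=
  foldl (fun EM N => updateTopology EM N (PeeV M (r N) N)) EM0 (enum V).

End Bitcoin.

From mathcomp Require Import all_boot.

(* A node reports the marker [N, M, r] to M only when it receives it from N
   as an inbound peer, so every node in L_N^M is an outbound peer of N;
   conversely N forwards the legitimate monitor's marker to all of its
   outbound peers, which all report back.  AToM overwrites row N of the
   snapshot with L_N^M, and the updates for the other nodes leave it alone. *)

Section PeerVerification.

Variables (V : finType) (Mon : Type) (Gamma : Mon -> Prop) (E : rel V).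

Lemma msg_node_monitor mk P M :
  msg Gamma E mk (Node Mon P) (Monitor V M) -> E (mk_target mk) P.
Proof.
move=> m; inversion m as [|X pfrom Y _ handle_X]; subst.
by case: handle_X => [[_ [_ [Z [monitor_is_node _]]]] | [_ [EP _]]].
Qed.

Lemma msg_forward_report mk P :
  Gamma (mk_mon mk) -> E (mk_target mk) P ->
  msg Gamma E mk (Node Mon P) (Monitor V (mk_mon mk)).
Proof.
move=> legit_mon EP.
apply: (msg_handle (pfrom := Node Mon (mk_target mk))); last by right.
apply: (msg_handle (pfrom := Monitor V (mk_mon mk))); first exact: msg_init.
by left; split=> //; split=> //; exists P.
Qed.

Lemma PeeV_iff M r N P : Gamma M -> PeeV Gamma E M r N P <-> E N P.
Proof.
move=> legit_M; split; first exact: msg_node_monitor.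
exact: (msg_forward_report (Marker N M r)).
Qed.

Lemma foldl_updateTopology_row (L : V -> V -> Prop) (s : seq V) EM N P :
  N \in s -> foldl (fun EM N => updateTopology EM N (L N)) EM s N P = L N P.
Proof.
elim/last_ind: s => [//|s x IHs].
rewrite foldl_rcons mem_rcons in_cons /updateTopology.
by case: eqP => [-> | _ /IHs].
Qed.

End PeerVerification.

Theorem theorem2 (V : finType) (Mon : Type) (Gamma : Mon -> Prop) (E : rel V)
  (M : Mon) (HM : Gamma M) (r : V -> nat) (EM0 : V -> V -> Prop) :
  forall N P : V, E N P <-> AToM Gamma E M r EM0 N P.
Proof.
move=> N P; rewrite /AToM foldl_updateTopology_row ?mem_enum //.
apply: iff_sym; exact: PeeV_iff.
Qed.
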